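(* Let $N\le V$ be a subspace such that there is an $X\in\mathcal G$ with $X\le N$ and $\dim(N/X)=1$, and let $\mathcal G\langle N]:=\{E\le V\mid E\le N \text{ and } \dim(N/E)=1\}$ (the top with carrier $N$). Then: (1) $\mathcal G\langle N]\subseteq\mathcal G$; (2) any two distinct elements $E,E'\in\mathcal G\langle N]$ are adjacent; (3) two adjacent elements $E,E'\in\mathcal G$ both belong to $\mathcal G\langle N]$ if and only if $E+E'=N$.
   Context: $K$ is a (not necessarily commutative) field and $V$ is a left vector space over $K$ of arbitrary (possibly infinite) dimension with $\dim V>2$. $\mathcal G:=\{X\le V\mid X\cong V/X\}$ is the set of subspaces of $V$ isomorphic (as $K$-vector spaces) to their quotient space, assumed nonempty. Dimensions are vector space dimensions. Two elements $X,Y\in\mathcal G$ are called adjacent if $\dim((X+Y)/X)=\dim((X+Y)/Y)=1$, equivalently $\dim(X/(X\cap Y))=\dim(Y/(X\cap Y))=1$. *)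

From HB Require Import structures.
From mathcomp Require Import all_boot all_order all_algebra.
Set Implicit Arguments. Unset Strict Implicit. Unset Printing Implicit Defensive.
Import GRing.Theory.
Local Open Scope ring_scope.

Definition division_ring (K : unitRingType) : Prop :=
  forall x : K, x != 0 -> x \is a GRing.unit.

Section Subspaces.
Variables (K : unitRingType) (V : lmodType K).

Definition subspace (X : V -> Prop) : Prop :=
  X 0 /\ forall (a : K) (x y : V), X x -> X y -> X (a *: x + y).

Definition subsp (X Y : V -> Prop) : Prop := forall v, X v -> Y v.

Definition seteq (X Y : V -> Prop) : Prop := forall v, X v <-> Y v.

Definition sumsp (X Y : V -> Prop) : V -> Prop :=
  fun v => exists x y, X x /\ Y y /\ v = x + y.

(* codim1 B A  :<->  B <= A and dim (A/B) = 1, i.e. A/B is spanned by the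
   class of a single vector v of A not in B. *)
Definition codim1 (B A : V -> Prop) : Prop :=
  subsp B A /\
  exists v, A v /\ ~ B v /\
    forall w, A w -> exists (a : K) (b : V), B b /\ w = a *: v + b.

(* X is isomorphic (as K-space) to V/X: there is a K-linear bijection
   X -> V/X, presented by a linear lift g : X -> V of it
   (x |-> g x + X). *)
Definition iso_quot (X : V -> Prop) : Prop :=
  exists g : V -> V,
    (forall (a : K) (x y : V), X x -> X y -> g (a *: x + y) = a *: g x + g y)
    /\ (forall x, X x -> X (g x) -> x = 0)
    /\ (forall v, exists x, X x /\ X (v - g x)).

Definition inG (X : V -> Prop) : Prop := subspace X /\ iso_quot X.

Definition adjacent (X Y : V -> Prop) : Prop :=
  codim1 X (sumsp X Y) /\ codim1 Y (sumsp X Y).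

Definition dim_gt2 : Prop :=
  exists u v w : V, forall a b c : K,
    a *: u + b *: v + c *: w = 0 -> a = 0 /\ b = 0 /\ c = 0.

End Subspaces.

(* Let X in G have codimension one in N. Any other E of codimension one in N
   is the image of X under a transvection v |-> v + f(v) (e - x) of V, where
   x in X \ E, e in E \ X and f is a linear form with f x = f e = 1 vanishing
   on the intersection of X and E; such an f exists by Zorn's lemma. A linear
   automorphism of V carries an isomorphism X ~ V/X to one E ~ V/E, so E is
   in G. Parts (2) and (3) only use that N = A + K z for every A of
   codimension one in N and every z in N \ A. *)
From mathcomp Require Import all_boot all_order all_algebra.
From mathcomp Require Import boolp classical_sets.
Set Implicit Arguments. Unset Strict Implicit. Unset Printing Implicit Defensive.
Import GRing.Theory.
Local Open Scope ring_scope.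

Section Codim1.
Variables (K : unitRingType) (hK : division_ring K) (V : lmodType K).
Implicit Types (A B E X S H N : V -> Prop) (u v w x y z : V).

Lemma subspace0 A : subspace A -> A 0.
Proof. by case. Qed.

Lemma subspaceZD A a x y : subspace A -> A x -> A y -> A (a *: x + y).
Proof. by case=> _; apply. Qed.

Lemma subspaceD A x y : subspace A -> A x -> A y -> A (x + y).
Proof. by move=> sA Ax Ay; have := subspaceZD 1 sA Ax Ay; rewrite scale1r. Qed.

Lemma subspaceZ A a x : subspace A -> A x -> A (a *: x).
Proof. by move=> sA Ax; have := subspaceZD a sA Ax (subspace0 sA); rewrite addr0. Qed.

Lemma subspaceN A x : subspace A -> A x -> A (- x).
Proof. by move=> sA Ax; rewrite -scaleN1r; apply: subspaceZ. Qed.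

Lemma subspaceB A x y : subspace A -> A x -> A y -> A (x - y).
Proof. by move=> sA Ax Ay; apply: subspaceD => //; apply: subspaceN. Qed.

Lemma scaleKV (a : K) v : a != 0 -> a^-1 *: (a *: v) = v.
Proof. by move=> /hK a_unit; rewrite scalerA mulVr // scale1r. Qed.

Lemma codim1_generator A N z : subspace A -> codim1 A N -> N z -> ~ A z ->
  forall y, N y -> exists a, A (y - a *: z).
Proof.
move=> sA [_ [v [_ [_ Nv_span]]]] Nz nAz y Ny.
have [a [b [Ab ez]]] := Nv_span _ Nz; have [c [b' [Ab' ->]]] := Nv_span _ Ny.
have a_neq0 : a != 0.
  by apply/negP => /eqP a0; apply: nAz; rewrite ez a0 scale0r add0r.
exists (c * a^-1).
rewrite ez scalerDr scalerA -mulrA mulVr ?hK // mulr1 opprD addrACA subrr add0r.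
by apply: subspaceB => //; apply: subspaceZ.
Qed.

Lemma codim1_subsp_eq A B N : subspace A -> subspace B ->
  codim1 A N -> codim1 B N -> subsp A B -> seteq A B.
Proof.
move=> sA sB cA [BN [v [Nv [nBv _]]]] AB b; split=> [/AB //|Bb].
apply/not_notP => nAb; have [a Av] := codim1_generator sA cA (BN _ Bb) nAb Nv.
apply: nBv; rewrite -(subrK (a *: b) v).
by apply: (subspaceD sB); [apply: AB | apply: subspaceZ].
Qed.

Lemma codim1_witnesses A B N : subspace A -> subspace B ->
  codim1 A N -> codim1 B N -> ~ subsp A B ->
  (exists a, A a /\ ~ B a) /\ (exists b, B b /\ ~ A b).
Proof.
move=> sA sB cA cB nAB; split.
  apply/not_notP => noa; apply: nAB => a Aa.
  by apply/not_notP => nBa; apply: noa; exists a.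
apply/not_notP => nob; apply: nAB => a Aa.
have BA : subsp B A by move=> b Bb; apply/not_notP => nAb; apply: nob; exists b.
exact/(codim1_subsp_eq sB sA cB cA BA).
Qed.

Lemma exists_hyperplane S u : subspace S -> ~ S u ->
  exists H, [/\ subspace H, subsp S H, ~ H u & forall v, exists a, H (v - a *: u)].
Proof.
move=> sS nSu.
(* Zorn_bigcup also applies to the empty chain, whose union is empty: so
   [P] can only demand [0 \in H] and [S \subset H] of nonempty [H]. *)
pose P := fun H : set V => [/\ ~ H u,
  forall a x y, H x -> H y -> H (a *: x + y) & (exists z, H z) -> subsp S H].
have [|H [[nHu clH neH] maxH]] := @Zorn_bigcup V P.
  move=> F FP chainF; split.
  - by case=> X FX Xu; have [] := FP _ FX.
  - move=> a x y [X1 F1 X1x] [X2 F2 X2y].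
    have [X12|X21] := chainF _ _ F1 F2.
    + by exists X2 => //; have [_ cl _] := FP _ F2; apply: cl => //; apply: X12.
    + by exists X1 => //; have [_ cl _] := FP _ F1; apply: cl => //; apply: X21.
  - case=> z [X FX Xz] w Sw; exists X => //.
    by have [_ _ XS] := FP _ FX; apply: XS => //; exists z.
have SH : subsp S H.
  apply: neH; apply/not_notP => emptyH.
  have H0 : H = set0 by apply/seteqP; split=> // z Hz; apply: emptyH; exists z.
  apply: (maxH S); last by split => //; [case: sS | move=> _ z].
  split; first by rewrite H0.
  by move=> HS; have := HS 0 (subspace0 sS); rewrite H0.
have sH : subspace H by split; [apply: SH; apply: subspace0 | exact: clH].
exists H; split => // v; apply/not_notP => nv.
pose Hv := fun z => exists a h, H h /\ z = a *: v + h.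
apply: (maxH Hv).
  split; first by move=> z Hz; exists 0, z; rewrite scale0r add0r.
  move=> HvH; have /HvH Hv_v : Hv v.
    by exists 1, 0; rewrite scale1r addr0; split=> //; apply: subspace0.
  by apply: nv; exists 0; rewrite scale0r subr0.
split.
- case=> a [h [Hh ea]].
  have [/eqP a0|a_neq0] := boolP (a == 0).
    by apply: nHu; rewrite ea a0 scale0r add0r.
  apply: nv; exists a^-1.
  rewrite ea scalerDr scaleKV // opprD addrA subrr add0r.
  by apply: subspaceN => //; apply: subspaceZ.
- move=> c _ _ [a [h [Hh ->]]] [b [h' [Hh' ->]]].
  exists (c * a + b), (c *: h + h'); split; first exact: clH.
  by rewrite scalerDr scalerDl scalerA addrACA.
- by move=> _ w Sw; exists 0, w; rewrite scale0r add0r; split => //; apply: SH.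
Qed.

Lemma separating_scalar S u : subspace S -> ~ S u ->
  exists f : V -> K, [/\ scalar f, f u = 1 & forall s, S s -> f s = 0].
Proof.
move=> sS nSu; have [H [sH SH nHu /choice[f Hf]]] := exists_hyperplane sS nSu.
have f_uniq v a : H (v - a *: u) -> f v = a.
  move=> Hva; apply/not_notP => neq; apply: nHu.
  have nz : a - f v != 0 by rewrite subr_eq0; apply/eqP => e; apply: neq.
  rewrite -(scaleKV u nz); apply: subspaceZ => //.
  have -> : (a - f v) *: u = (v - f v *: u) - (v - a *: u).
    by rewrite scalerBl [RHS]addrC opprB addrA subrK.
  exact: subspaceB.
exists f; split.
- move=> c v w; apply: f_uniq.
  have -> : c *: v + w - (c * f v + f w) *: u = c *: (v - f v *: u) + (w - f w *: u).
    by rewrite scalerDl -scalerA scalerBr opprD addrACA.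
  exact: subspaceZD.
- by apply: f_uniq; rewrite scale1r subrr; apply: subspace0.
- by move=> s Ss; apply: f_uniq; rewrite scale0r subr0; apply: SH.
Qed.

Definition transvection (f : V -> K) d v : V := v + f v *: d.

Lemma transvection_linear f d : scalar f -> linear (transvection f d).
Proof.
by move=> lf a v w; rewrite /transvection lf scalerDl -scalerA scalerDr addrACA.
Qed.

Lemma transvectionK f d : scalar f -> f d = 0 ->
  cancel (transvection f d) (transvection f (- d)).
Proof.
move=> lf fd0 v; have fv : f (v + f v *: d) = f v.
  by rewrite addrC lf fd0 mulr0 add0r.
by rewrite /transvection fv scalerN addrK.
Qed.

Lemma transvection_codim1 A B N f x e :
  subspace A -> subspace B -> codim1 A N -> codim1 B N ->
  A x -> ~ B x -> B e -> scalar f -> f x = 1 -> f e = 1 ->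
  (forall w, A w -> B w -> f w = 0) ->
  forall y, A y -> B (transvection f (e - x) y).
Proof.
move=> sA sB cA cB Ax nBx Be lf fx fe fAB y Ay.
have [a Bya] := codim1_generator sB cB (cA.1 _ Ax) nBx (cA.1 _ Ay).
have Aya : A (y - a *: x) by apply: subspaceB => //; apply: subspaceZ.
have fy : f y = a.
  by rewrite -[y](subrK (a *: x)) addrC lf fx mulr1 fAB // addr0.
rewrite /transvection fy scalerBr addrA addrAC.
by apply: subspaceD => //; apply: subspaceZ.
Qed.

Lemma codim1_transvection X E N x e :
  subspace X -> subspace E -> codim1 X N -> codim1 E N ->
  X x -> ~ E x -> E e -> ~ X e ->
  exists f : V -> K, [/\ scalar f, f (e - x) = 0, f (x - e) = 0,
    forall y, X y -> E (transvection f (e - x) y)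
  & forall y, E y -> X (transvection f (x - e) y)].
Proof.
move=> sX sE cX cE Xx nEx Ee nXe.
pose S := fun v => exists w a, [/\ X w, E w & v = w + a *: (x - e)].
have sS : subspace S.
  split; first by exists 0, 0; rewrite scale0r addr0; split=> //; apply: subspace0.
  move=> c _ _ [w [a [Xw Ew ->]]] [w' [a' [Xw' Ew' ->]]].
  exists (c *: w + w'), (c * a + a'); split; try exact: subspaceZD.
  by rewrite scalerDr scalerDl scalerA addrACA.
have nSx : ~ S x.
  case=> w [a [Xw Ew ex]]; have [/eqP a0|a_neq0] := boolP (a == 0).
    by apply: nEx; rewrite ex a0 scale0r addr0.
  apply: nXe; rewrite -(scaleKV e a_neq0).
  have -> : a *: e = (w - x) + a *: x.
    by rewrite [in w - x]ex opprD addrA subrr add0r scalerBr opprB subrK.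
  apply: subspaceZ => //; apply: (subspaceD sX); [exact: subspaceB | exact: subspaceZ].
have [f [lf fx fS]] := separating_scalar sS nSx.
have fXE w : X w -> E w -> f w = 0.
  by move=> Xw Ew; apply: fS; exists w, 0; rewrite scale0r addr0.
have fxe : f (x - e) = 0.
  by apply: fS; exists 0, 1; rewrite scale1r add0r; split => //; apply: subspace0.
have fex : f (e - x) = 0.
  apply: fS; exists 0, (-1); rewrite scaleN1r opprB add0r.
  by split=> //; apply: subspace0.
have fe : f e = 1.
  by rewrite -[e](subrK x) -[e - x]scale1r lf mul1r fex fx add0r.
exists f; split => //.
- exact: (transvection_codim1 sX sE cX cE).
- apply: (transvection_codim1 sE sX cE cX) => // w Ew Xw; exact: fXE.
Qed.

Lemma iso_quot_transport X E (s s' : V -> V) : linear s -> linear s' ->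
  cancel s s' -> cancel s' s ->
  (forall y, X y -> E (s y)) -> (forall y, E y -> X (s' y)) ->
  iso_quot X -> iso_quot E.
Proof.
move=> ls ls' sK s'K XE EX [g [lg [g_inj g_surj]]].
exists (s \o g \o s'); split; [|split].
- by move=> a y z Ey Ez /=; rewrite ls' lg ?ls //; apply: EX.
- move=> z Ez /= Esgz; have Xgz : X (g (s' z)) by rewrite -[g _]sK; apply: EX.
  rewrite -[z]s'K (g_inj _ (EX _ Ez) Xgz).
  by have := ls (-1) 0 0; rewrite scaler0 addr0 scaleN1r addNr.
- move=> v; have [x [Xx Xvx]] := g_surj (s' v).
  exists (s x); split; first exact: XE.
  by rewrite /= sK -[v in v - _]s'K -(zmod_morphism_linear ls); apply: XE.
Qed.

Lemma codim1_inG X E N : inG X -> codim1 X N -> subspace E -> codim1 E N ->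
  inG E.
Proof.
move=> [sX isoX] cX sE cE; split => //.
have [XE|nXE] := pselect (subsp X E).
  have eqXE := codim1_subsp_eq sX sE cX cE XE.
  have lid : linear (@id V) by [].
  by apply: (iso_quot_transport lid lid _ _ _ _ isoX) => // y /eqXE.
have [[x [Xx nEx]] [e [Ee nXe]]] := codim1_witnesses sX sE cX cE nXE.
have [f [lf fex fxe XE EX]] := codim1_transvection sX sE cX cE Xx nEx Ee nXe.
apply: (iso_quot_transport (transvection_linear _ lf) (transvection_linear _ lf)
  _ _ XE EX isoX).
- by rewrite -[x - e]opprB; apply: transvectionK.
- by rewrite -[e - x]opprB; apply: transvectionK.
Qed.

Lemma sumspC A B : seteq (sumsp A B) (sumsp B A).
Proof. by move=> v; split=> -[x [y [Ax [By ->]]]]; exists y, x; rewrite addrC. Qed.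

Lemma codim1_seteq A N N' : seteq N N' -> codim1 A N -> codim1 A N'.
Proof.
move=> eqN [AN [v [Nv [nAv Nv_span]]]]; split=> [y /AN /eqN //|].
by exists v; split; [apply/eqN | split=> // w /eqN; apply: Nv_span].
Qed.

Lemma codim1_sumsp A B N : subspace A -> subspace B -> codim1 A N ->
  subsp B N -> forall b, B b -> ~ A b -> codim1 A (sumsp A B).
Proof.
move=> sA sB cA BN b Bb nAb; split.
  move=> y Ay; exists y, 0; rewrite addr0.
  by split=> //; split=> //; apply: subspace0.
exists b; split; first by exists 0, b; rewrite add0r; split=> //; apply: subspace0.
split=> // _ [y [z [Ay [Bz ->]]]].
have [a Aza] := codim1_generator sA cA (BN _ Bb) nAb (BN _ Bz).
exists a, (y + (z - a *: b)); split; first exact: subspaceD.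
by rewrite addrCA [a *: b + _]addrC subrK.
Qed.

Lemma codim1_sumsp_eq E E' N y : subspace N -> subspace E -> subspace E' ->
  codim1 E N -> codim1 E' N -> E' y -> ~ E y -> seteq (sumsp E E') N.
Proof.
move=> sN sE sE' cE cE' E'y nEy v; split.
  case=> x [x' [Ex [E'x' ->]]].
  by apply: (subspaceD sN); [apply: cE.1 | apply: cE'.1].
move=> Nv; have [a Eva] := codim1_generator sE cE (cE'.1 _ E'y) nEy Nv.
exists (v - a *: y), (a *: y); split=> //; split; last by rewrite subrK.
exact: subspaceZ.
Qed.

Lemma adjacent_witness E E' : subspace E -> adjacent E E' ->
  exists y, E' y /\ ~ E y.
Proof.
move=> sE [[_ [u [[x [y [Ex [E'y ->]]]] [nExy _]]]] _].
by exists y; split=> // Ey; apply: nExy; apply: subspaceD.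
Qed.

Lemma codim1_adjacent E E' N : subspace E -> subspace E' ->
  codim1 E N -> codim1 E' N -> ~ seteq E E' -> adjacent E E'.
Proof.
move=> sE sE' cE cE' neqEE'.
have nEE' : ~ subsp E E' by move/(codim1_subsp_eq sE sE' cE cE').
have [[e [Ee nE'e]] [e' [E'e' nEe']]] := codim1_witnesses sE sE' cE cE' nEE'.
split; first exact: (codim1_sumsp sE sE' cE cE'.1 E'e' nEe').
exact: codim1_seteq (sumspC E' E) (codim1_sumsp sE' sE cE' cE.1 Ee nE'e).
Qed.

Lemma adjacent_codim1P E E' N : subspace N -> subspace E -> subspace E' ->
  adjacent E E' -> (codim1 E N /\ codim1 E' N) <-> seteq (sumsp E E') N.
Proof.
move=> sN sE sE' adjEE'; split=> [[cE cE']|eqN].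
  have [y [E'y nEy]] := adjacent_witness sE adjEE'.
  exact: (codim1_sumsp_eq sN sE sE' cE cE' E'y nEy).
by split; apply: (codim1_seteq eqN); [exact: adjEE'.1 | exact: adjEE'.2].
Qed.

End Codim1.

Theorem lemma2p2 (K : unitRingType) (hK : division_ring K) (V : lmodType K)
  (hdim : dim_gt2 V) (hGne : exists X : V -> Prop, inG X)
  (N : V -> Prop) (hN : subspace N)
  (hX : exists X : V -> Prop, inG X /\ codim1 X N) :
  (forall E : V -> Prop, subspace E -> codim1 E N -> inG E)
  /\ (forall E E' : V -> Prop, subspace E -> subspace E' ->
        codim1 E N -> codim1 E' N -> ~ seteq E E' -> adjacent E E')
  /\ (forall E E' : V -> Prop, inG E -> inG E' -> adjacent E E' ->
        ((codim1 E N /\ codim1 E' N) <-> seteq (sumsp E E') N)).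
Proof.
have [X [GX cX]] := hX.
split; first by move=> E sE cE; exact: (codim1_inG hK GX cX sE cE).
split.
  by move=> E E' sE sE' cE cE'; exact: (codim1_adjacent hK sE sE' cE cE').
by move=> E E' [sE _] [sE' _]; exact: (adjacent_codim1P hK hN sE sE').
Qed.
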